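(* Let $(\tau,R)$ be a generic $M$-layer model and $\psi=\Psi(\tau,R)$. Then $U_\psi\subset\mathbb{R}^{M+1}$ is a convex open set containing $\tau$, and $\mathcal{R}_\psi\subset(-1,1)^{M+1}$ is an open set containing $R$.
   Context: An $M$-layer model ($M\ge1$) is $(\tau,R)$ with $\tau\in\mathbb{R}^{M+1}_{>0}$, $R\in(-1,1)^{M+1}$. $\mathfrak{L}_M\subset\mathbb{Z}^{M+1}_{\geq0}$: all $k$ with $k_0=1$ and $k_n>0\Rightarrow k_{n-1}>0$ ($1\le n\le M$); $\mathfrak{L}^\tau_M=\{k\in\mathfrak{L}_M:\langle k,\tau\rangle\le\langle\mathbb{1},\tau\rangle\}$. Amplitude polynomial: $\mathbb{1}=(1,\ldots,1)$; inequalities and $\min$ entrywise; $x^k=\prod_n x_n^{k_n}$, $\binom{k}{b}=\prod_n\binom{k_n}{b_n}$; $\tilde k=(k_1,\ldots,k_M,0)$, $u=\min\{\mathbb{1},\tilde k\}$, $V(k)=\{b:u\le b\le\min\{k,\tilde k\}\}$, $a(x,k)=\sum_{b\in V(k)}\binom{k}{b}\binom{\tilde k-u}{b-u}(-x)^{\tilde k-b}x^{k-b}\prod_n(1-x_n^2)^{b_n}$. Data: $D^{(\tau,R)}(t)=\sum_{k\in\mathfrak{L}^\tau_M}a(R,k)\delta(t-\langle k,\tau\rangle)$, in normal form $\sum_{n=1}^d\alpha_n\delta(t-\sigma_n)$ ($\alpha_n\ne0$, $\sigma_1<\cdots<\sigma_d$). With $S=\{\sigma_n\}$, the enumeration function $\Psi(\tau,R):\mathfrak{L}^\tau_M\to\{0,\ldots,d\}$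 sends $k$ to $0$ if $\langle k,\tau\rangle\notin S$ and to $1+\#\{s\in S:s<\langle k,\tau\rangle\}$ otherwise. $(\tau,R)$ is generic if $\Psi(\tau,R)$ is injective and never $0$. For $\psi=\Psi(\tau,R)$ with $(\tau,R)$ generic: $\mathcal{R}_\psi=\{R'\in(-1,1)^{M+1}: a(R',k)\ne0\ \forall k\in\mathfrak{L}^\tau_M\}$, and $U_\psi=\{\tau'\in\mathbb{R}^{M+1}_{>0}:\Psi(\tau',R')=\psi\text{ for all }R'\in\mathcal{R}_\psi\}$ (equality of functions, including equality of domains $\mathfrak{L}^{\tau'}_M=\mathfrak{L}^\tau_M$). *)

From Stdlib Require Import Reals Lra Lia ZArith Arith List.
Import ListNotations.
Open Scope R_scope.

(* Vectors in R^{M+1} / Z^{M+1} are encoded as functions on nat; only the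
   coordinates 0..M are ever used.  Multi-indices k are nat -> nat and, to
   have a canonical representative, are required to vanish beyond M. *)

Fixpoint sumR (f : nat -> R) (n : nat) : R :=
  match n with O => 0 | S m => sumR f m + f m end.
Fixpoint prodR (f : nat -> R) (n : nat) : R :=
  match n with O => 1 | S m => prodR f m * f m end.

Definition dot (M : nat) (k : nat -> nat) (tau : nat -> R) : R :=
  sumR (fun n => INR (k n) * tau n) (S M).
Definition one_dot (M : nat) (tau : nat -> R) : R := sumR tau (S M).

Definition pos_vec (M : nat) (tau : nat -> R) : Prop :=
  forall n, (n <= M)%nat -> 0 < tau n.
Definition cube_vec (M : nat) (x : nat -> R) : Prop :=
  forall n, (n <= M)%nat -> -1 < x n < 1.

Definition inLM (M : nat) (k : nat -> nat) : Prop :=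
  k 0%nat = 1%nat /\
  (forall n, (1 <= n <= M)%nat -> (0 < k n)%nat -> (0 < k (n - 1))%nat) /\
  (forall n, (M < n)%nat -> k n = 0%nat).

Definition inL (M : nat) (tau : nat -> R) (k : nat -> nat) : Prop :=
  inLM M k /\ dot M k tau <= one_dot M tau.

Definition ktil (M : nat) (k : nat -> nat) (n : nat) : nat :=
  if (n <? M)%nat then k (S n) else 0%nat.
Definition ulow (M : nat) (k : nat -> nat) (n : nat) : nat :=
  Nat.min 1 (ktil M k n).
Definition uhigh (M : nat) (k : nat -> nat) (n : nat) : nat :=
  Nat.min (k n) (ktil M k n).

Definition upd (b : nat -> nat) (n v : nat) : nat -> nat :=
  fun i => if Nat.eqb i n then v else b i.

Fixpoint boxl (lo hi : nat -> nat) (n : nat) : list (nat -> nat) :=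
  match n with
  | O => [fun _ => 0%nat]
  | S m => flat_map (fun b => map (fun v => upd b m v)
                                  (seq (lo m) (S (hi m) - lo m)))
                    (boxl lo hi m)
  end.

Definition Vk (M : nat) (k : nat -> nat) : list (nat -> nat) :=
  boxl (ulow M k) (uhigh M k) (S M).

Definition a_term (M : nat) (x : nat -> R) (k b : nat -> nat) : R :=
  prodR (fun n =>
     C (k n) (b n)
     * C (ktil M k n - ulow M k n) (b n - ulow M k n)
     * (- x n) ^ (ktil M k n - b n)
     * (x n) ^ (k n - b n)
     * (1 - (x n) ^ 2) ^ (b n)) (S M).

Definition amp (M : nat) (x : nat -> R) (k : nat -> nat) : R :=
  fold_right Rplus 0 (map (a_term M x k) (Vk M k)).

Definition inLb (M : nat) (tau : nat -> R) (k : nat -> nat) : bool :=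
  Nat.eqb (k 0%nat) 1 &&
  forallb (fun n => implb (0 <? k n)%nat (0 <? k (n - 1))%nat) (seq 1 M) &&
  (if Rle_dec (dot M k tau) (one_dot M tau) then true else false).

(* coordinate bounds: k n * tau n <= <1,tau> forces k n < up(<1,tau>/tau n) *)
Definition kbound (M : nat) (tau : nat -> R) (n : nat) : nat :=
  Z.to_nat (up (one_dot M tau / tau n)).

Definition Ltau (M : nat) (tau : nat -> R) : list (nat -> nat) :=
  filter (inLb M tau) (boxl (fun _ => 0%nat) (kbound M tau) (S M)).

(* coefficient of delta(t - s) in D^(tau,R) *)
Definition coef (M : nat) (tau x : nat -> R) (s : R) : R :=
  fold_right Rplus 0
    (map (fun k => if Req_dec_T (dot M k tau) s then amp M x k else 0)
         (Ltau M tau)).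

Definition Ssupp (M : nat) (tau x : nat -> R) : list R :=
  nodup Req_dec_T
    (filter (fun s => if Req_dec_T (coef M tau x s) 0 then false else true)
            (map (fun k => dot M k tau) (Ltau M tau))).

Definition Psi (M : nat) (tau x : nat -> R) (k : nat -> nat) : nat :=
  let s := dot M k tau in
  let Sl := Ssupp M tau x in
  if in_dec Req_dec_T s Sl
  then Datatypes.S (length (filter (fun s' => if Rlt_dec s' s then true else false) Sl))
  else 0%nat.

Definition generic (M : nat) (tau x : nat -> R) : Prop :=
  (forall k, inL M tau k -> Psi M tau x k <> 0%nat) /\
  (forall k k', inL M tau k -> inL M tau k' ->
     Psi M tau x k = Psi M tau x k' -> forall n, k n = k' n).

(* R_psi, for psi = Psi(tau,R): its domain is L^tau_M *)
Definition Rpsi (M : nat) (tau : nat -> R) (x' : nat -> R) : Prop :=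
  cube_vec M x' /\ forall k, inL M tau k -> amp M x' k <> 0.

Definition Upsi (M : nat) (tau x : nat -> R) (tau' : nat -> R) : Prop :=
  pos_vec M tau' /\
  forall x', Rpsi M tau x' ->
    (forall k, inL M tau' k <-> inL M tau k) /\
    (forall k, inL M tau k -> Psi M tau' x' k = Psi M tau x k).

Definition open_vec (M : nat) (A : (nat -> R) -> Prop) : Prop :=
  forall y, A y -> exists eps, 0 < eps /\
    forall z, (forall n, (n <= M)%nat -> Rabs (z n - y n) < eps) -> A z.

Definition convex_vec (A : (nat -> R) -> Prop) : Prop :=
  forall y z (l : R), A y -> A z -> 0 <= l <= 1 ->
    A (fun n => l * y n + (1 - l) * z n).

From Stdlib Require Import Reals Lra Lia List Permutation FunctionalExtensionality.
Open Scope R_scope.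

(** The proof rests on a characterisation of U_psi by finitely many linear
    conditions.  For a generic (tau, R) every k in L^tau has a distinct
    delay <k,tau> and a non-zero amplitude, so for every R' in R_psi the data
    D^(tau',R') (with L^tau' = L^tau) has support exactly {<k,tau'>} and
    Psi(tau',R') k is the rank of <k,tau'> in that set.  Hence tau' lies in
    U_psi iff tau' > 0, L^tau' = L^tau, and k |-> <k,tau'> orders L^tau
    strictly like k |-> <k,tau>  ([same_pattern], lemma [Upsi_iff_same_pattern]).
    Every condition in [same_pattern] is a linear inequality in tau' that is
    preserved by convex combinations, and (L^tau being finite, and L^tau'
    being locally constant around a point with distinct delays) is stable
    under small perturbations: this gives convexity and openness.  Openness of
    R_psi is continuity of the finitely many polynomials a(., k), k in L^tau. *)

(** ** Neighbourhoods in the sup-norm on coordinates 0..M *)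

Definition nb (M : nat) (y : nat -> R) (P : (nat -> R) -> Prop) : Prop :=
  exists d, 0 < d /\
    forall z, (forall n, (n <= M)%nat -> Rabs (z n - y n) < d) -> P z.

Lemma nb_true M y : nb M y (fun _ => True).
Proof. exists 1; split; [lra | auto]. Qed.

Lemma nb_and M y (P Q : (nat -> R) -> Prop) :
  nb M y P -> nb M y Q -> nb M y (fun z => P z /\ Q z).
Proof.
  intros [d1 [H1 P1]] [d2 [H2 P2]]. exists (Rmin d1 d2); split.
  - apply Rmin_pos; auto.
  - intros z Hz; split; [apply P1 | apply P2]; intros n Hn; specialize (Hz n Hn);
      pose proof (Rmin_l d1 d2); pose proof (Rmin_r d1 d2); lra.
Qed.

Lemma nb_mono M y (P Q : (nat -> R) -> Prop) :
  (forall z, P z -> Q z) -> nb M y P -> nb M y Q.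
Proof. intros H [d [Hd Hp]]. exists d; split; auto. Qed.

Lemma nb_list {A} M y (l : list A) (P : A -> (nat -> R) -> Prop) :
  (forall a, In a l -> nb M y (P a)) -> nb M y (fun z => forall a, In a l -> P a z).
Proof.
  induction l as [|b l IH]; intros H.
  - eapply nb_mono; [| apply nb_true]. intros z _ a [].
  - eapply nb_mono;
      [| apply nb_and; [apply (H b); left; auto | apply IH; intros; apply H; right; auto]].
    intros z [Hb Hl] a [<- | Ha]; auto.
Qed.

Lemma nb_upto M y (P : nat -> (nat -> R) -> Prop) :
  (forall n, (n <= M)%nat -> nb M y (P n)) ->
  nb M y (fun z => forall n, (n <= M)%nat -> P n z).
Proof.
  intros H. eapply nb_mono; [| apply (nb_list M y (seq 0 (S M)) P)].
  - intros z Hz n Hn. apply Hz. apply in_seq; lia.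
  - intros a Ha. apply in_seq in Ha. apply H; lia.
Qed.

(** ** Continuity of functions of a weight vector *)

Definition cont (M : nat) (f : (nat -> R) -> R) : Prop :=
  forall y e, 0 < e -> nb M y (fun z => Rabs (f z - f y) < e).

Lemma cont_const M c : cont M (fun _ => c).
Proof. intros y e He. exists 1; split; [lra |]. intros z _. rewrite Rminus_diag, Rabs_R0; auto. Qed.

Lemma cont_coord M n : (n <= M)%nat -> cont M (fun z => z n).
Proof. intros Hn y e He. exists e; split; auto. Qed.

Lemma cont_plus M f g : cont M f -> cont M g -> cont M (fun z => f z + g z).
Proof.
  intros Hf Hg y e He.
  eapply nb_mono; [| apply nb_and; [apply (Hf y (e / 2)) | apply (Hg y (e / 2))]]; try lra.
  intros z [H1 H2]. replace (f z + g z - (f y + g y)) with ((f z - f y) + (g z - g y)) by ring.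
  pose proof (Rabs_triang (f z - f y) (g z - g y)). lra.
Qed.

Lemma cont_opp M f : cont M f -> cont M (fun z => - f z).
Proof.
  intros Hf y e He. eapply nb_mono; [| apply (Hf y e He)]. intros z H.
  replace (- f z - - f y) with (- (f z - f y)) by ring. rewrite Rabs_Ropp; auto.
Qed.

Lemma cont_minus M f g : cont M f -> cont M g -> cont M (fun z => f z - g z).
Proof. intros. unfold Rminus. apply cont_plus; auto. apply cont_opp; auto. Qed.

Lemma cont_mult M f g : cont M f -> cont M g -> cont M (fun z => f z * g z).
Proof.
  intros Hf Hg y e He. set (a := f y). set (b := g y).
  assert (Ha : 0 <= Rabs a) by apply Rabs_pos.
  assert (Hb : 0 <= Rabs b) by apply Rabs_pos.
  set (ea := e / (2 * (Rabs a + 1))).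
  set (e1 := e / (2 * (Rabs b + 1))).
  set (e2 := Rmin 1 ea).
  assert (Hea : 0 < ea) by (unfold ea; apply Rdiv_lt_0_compat; lra).
  assert (He1 : 0 < e1) by (unfold e1; apply Rdiv_lt_0_compat; lra).
  assert (He2 : 0 < e2) by (unfold e2; apply Rmin_pos; lra).
  pose proof (Rmin_l 1 ea) as Hm1. pose proof (Rmin_r 1 ea) as Hm2. fold e2 in Hm1, Hm2.
  eapply nb_mono; [| apply nb_and; [apply (Hf y e1 He1) | apply (Hg y e2 He2)]].
  intros z [H1 H2]. fold a b in H1, H2 |- *.
  replace (f z * g z - a * b) with ((f z - a) * g z + a * (g z - b)) by ring.
  pose proof (Rabs_triang ((f z - a) * g z) (a * (g z - b))) as Htri.
  rewrite !Rabs_mult in Htri.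
  assert (Hgz : Rabs (g z) <= Rabs b + 1).
  { replace (g z) with (b + (g z - b)) by ring. pose proof (Rabs_triang b (g z - b)). lra. }
  assert (A1 : Rabs (f z - a) * Rabs (g z) <= e1 * (Rabs b + 1)).
  { apply Rmult_le_compat; try apply Rabs_pos; lra. }
  assert (A2 : Rabs a * Rabs (g z - b) <= Rabs a * ea) by (apply Rmult_le_compat_l; lra).
  assert (E1 : e1 * (Rabs b + 1) = e / 2) by (unfold e1; field; lra).
  assert (E2 : Rabs a * ea < e / 2).
  { apply (Rmult_lt_reg_r (2 * (Rabs a + 1))); [lra |].
    replace (Rabs a * ea * (2 * (Rabs a + 1))) with (Rabs a * e) by (unfold ea; field; lra).
    nra. }
  lra.
Qed.

Lemma cont_pow M f k : cont M f -> cont M (fun z => (f z) ^ k).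
Proof.
  intros Hf. induction k; simpl.
  - apply cont_const.
  - apply cont_mult; auto.
Qed.

Lemma cont_sumR M (F : (nat -> R) -> nat -> R) N :
  (forall n, (n < N)%nat -> cont M (fun z => F z n)) -> cont M (fun z => sumR (F z) N).
Proof.
  induction N; intros H; simpl.
  - apply cont_const.
  - apply cont_plus; [apply IHN; intros; apply H; lia | apply H; lia].
Qed.

Lemma cont_prodR M (F : (nat -> R) -> nat -> R) N :
  (forall n, (n < N)%nat -> cont M (fun z => F z n)) -> cont M (fun z => prodR (F z) N).
Proof.
  induction N; intros H; simpl.
  - apply cont_const.
  - apply cont_mult; [apply IHN; intros; apply H; lia | apply H; lia].
Qed.

Lemma cont_fold {A} M (h : (nat -> R) -> A -> R) l :
  (forall a, In a l -> cont M (fun z => h z a)) ->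
  cont M (fun z => fold_right Rplus 0 (map (h z) l)).
Proof.
  induction l as [|b l IH]; intros H; simpl.
  - apply cont_const.
  - apply cont_plus; [apply H; left; auto | apply IH; intros; apply H; right; auto].
Qed.

Lemma cont_amp M k : cont M (fun z => amp M z k).
Proof.
  unfold amp. apply (cont_fold M (fun z b => a_term M z k b)). intros b _.
  unfold a_term. apply cont_prodR. intros n Hn.
  assert (Hx : cont M (fun z => z n)) by (apply cont_coord; lia).
  repeat apply cont_mult; try apply cont_const; apply cont_pow;
    [apply cont_opp | | apply cont_minus; [apply cont_const | apply cont_pow]]; auto.
Qed.

Lemma cont_dot M k : cont M (fun z => dot M k z).
Proof.
  unfold dot. apply cont_sumR. intros n Hn.
  apply cont_mult; [apply cont_const | apply cont_coord; lia].
Qed.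

Lemma cont_one_dot M : cont M (fun z => one_dot M z).
Proof. unfold one_dot. apply cont_sumR. intros n Hn. apply cont_coord; lia. Qed.

Lemma nb_lt M f g y :
  cont M f -> cont M g -> f y < g y -> nb M y (fun z => f z < g z).
Proof.
  intros Hf Hg Hlt. assert (Hd := cont_minus M g f Hg Hf).
  eapply nb_mono; [| apply (Hd y (g y - f y)); lra].
  intros z Hz. apply Rabs_def2 in Hz. lra.
Qed.

Lemma nb_lt_persist M f g y :
  cont M f -> cont M g -> nb M y (fun z => f y < g y -> f z < g z).
Proof.
  intros Hf Hg. destruct (Rlt_dec (f y) (g y)) as [Hlt | Hge].
  - eapply nb_mono; [| apply (nb_lt M f g y Hf Hg Hlt)]. auto.
  - eapply nb_mono; [| apply nb_true]. intros z _ Hlt. contradiction.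
Qed.

Lemma nb_neq M f y : cont M f -> f y <> 0 -> nb M y (fun z => f z <> 0).
Proof.
  intros Hf Hy. eapply nb_mono; [| apply (Hf y (Rabs (f y))); apply Rabs_pos_lt; auto].
  intros z Hz E. simpl in Hz. rewrite E, Rminus_0_l, Rabs_Ropp in Hz. lra.
Qed.

Lemma sumR_ext f g N : (forall i, (i < N)%nat -> f i = g i) -> sumR f N = sumR g N.
Proof. induction N; intros H; simpl; auto. rewrite IHN, H; auto; intros; apply H; lia. Qed.

Lemma sumR_ge_term f N n :
  (forall i, (i < N)%nat -> 0 <= f i) -> (n < N)%nat -> f n <= sumR f N.
Proof.
  assert (Hnn : forall N, (forall i, (i < N)%nat -> 0 <= f i) -> 0 <= sumR f N).
  { induction N0 as [|N0 IH]; intros H; simpl; [lra |].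
    pose proof (H N0 ltac:(lia)). pose proof (IH ltac:(intros; apply H; lia)). lra. }
  induction N; intros H Hn; [lia |]. simpl.
  destruct (Nat.eq_dec n N) as [-> | Hne].
  - pose proof (Hnn N ltac:(intros; apply H; lia)). lra.
  - pose proof (IHN ltac:(intros; apply H; lia) ltac:(lia)). pose proof (H N ltac:(lia)). lra.
Qed.

Lemma dot_ge_term M k t n : pos_vec M t -> (n <= M)%nat -> INR (k n) * t n <= dot M k t.
Proof.
  intros Ht Hn. unfold dot. apply (sumR_ge_term (fun n => INR (k n) * t n)); [| lia].
  intros i Hi. apply Rmult_le_pos; [apply pos_INR | left; apply Ht; lia].
Qed.

Definition comb (l : R) (y z : nat -> R) : nat -> R := fun n => l * y n + (1 - l) * z n.

Lemma sumR_comb f g l N : sumR (comb l f g) N = l * sumR f N + (1 - l) * sumR g N.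
Proof. induction N; simpl; [unfold comb; ring |]. rewrite IHN. unfold comb. ring. Qed.

Lemma dot_comb M k y z l : dot M k (comb l y z) = l * dot M k y + (1 - l) * dot M k z.
Proof.
  unfold dot. rewrite <- sumR_comb. apply sumR_ext. intros i _. unfold comb. ring.
Qed.

Lemma one_dot_comb M y z l : one_dot M (comb l y z) = l * one_dot M y + (1 - l) * one_dot M z.
Proof. apply sumR_comb. Qed.

Lemma comb_le l a b a' b' : 0 <= l <= 1 -> a <= a' -> b <= b' ->
  l * a + (1 - l) * b <= l * a' + (1 - l) * b'.
Proof.
  intros Hl Ha Hb. apply Rplus_le_compat; apply Rmult_le_compat_l; lra.
Qed.

Lemma comb_lt l a b a' b' : 0 <= l <= 1 -> a < a' -> b < b' ->
  l * a + (1 - l) * b < l * a' + (1 - l) * b'.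
Proof.
  intros Hl Ha Hb. destruct (Rle_lt_or_eq_dec l 1 (proj2 Hl)) as [Hl1 | ->].
  - apply Rplus_le_lt_compat; [apply Rmult_le_compat_l | apply Rmult_lt_compat_l]; lra.
  - lra.
Qed.

Definition onesv (M : nat) : nat -> nat := fun n => if (n <=? M)%nat then 1%nat else 0%nat.

Lemma dot_onesv M t : dot M (onesv M) t = one_dot M t.
Proof.
  unfold dot, one_dot. apply sumR_ext. intros i Hi. unfold onesv.
  destruct (Nat.leb_spec i M); [simpl; ring | lia].
Qed.

Lemma onesv_inL M t : inL M t (onesv M).
Proof.
  split; [split; [| split] |].
  - reflexivity.
  - intros n Hn _. unfold onesv. destruct (Nat.leb_spec (n - 1) M); lia.
  - intros n Hn. unfold onesv. destruct (Nat.leb_spec n M); lia.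
  - rewrite dot_onesv. lra.
Qed.

Lemma min_pos M y : pos_vec M y -> exists m, 0 < m /\ forall n, (n <= M)%nat -> m <= y n.
Proof.
  intros Hp. induction M.
  - exists (y 0%nat). split; [apply Hp; lia |]. intros n Hn. replace n with 0%nat by lia. lra.
  - destruct IHM as [m [Hm H]]; [intros n Hn; apply Hp; lia |].
    exists (Rmin m (y (S M))). split; [apply Rmin_pos; auto; apply Hp; lia |].
    intros n Hn. destruct (Nat.eq_dec n (S M)) as [-> | Hne]; [apply Rmin_r |].
    pose proof (Rmin_l m (y (S M))). pose proof (H n ltac:(lia)). lra.
Qed.

Lemma boxl_zero lo hi n b : In b (boxl lo hi n) -> forall i, (n <= i)%nat -> b i = 0%nat.
Proof.
  revert b; induction n; intros b Hb i Hi; simpl in Hb.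
  - destruct Hb as [<- | []]; auto.
  - apply in_flat_map in Hb. destruct Hb as [b' [Hb' Hm]].
    apply in_map_iff in Hm. destruct Hm as [v [<- _]].
    unfold upd. destruct (Nat.eqb_spec i n); [lia |]. apply IHn; auto; lia.
Qed.

Lemma boxl_in lo hi n b : (forall i, (i < n)%nat -> (lo i <= b i <= hi i)%nat) ->
  (forall i, (n <= i)%nat -> b i = 0%nat) -> In b (boxl lo hi n).
Proof.
  revert b; induction n; intros b H1 H2; simpl.
  - left. apply functional_extensionality. intros i. symmetry. apply H2. lia.
  - apply in_flat_map. exists (upd b n 0%nat). split.
    + apply IHn.
      * intros i Hi. unfold upd. destruct (Nat.eqb_spec i n); [lia |]. apply H1; lia.
      * intros i Hi. unfold upd. destruct (Nat.eqb_spec i n); auto. apply H2; lia.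
    + apply in_map_iff. exists (b n). split.
      * apply functional_extensionality. intros i. unfold upd.
        destruct (Nat.eqb_spec i n); subst; auto.
      * apply in_seq. specialize (H1 n ltac:(lia)). destruct (lo n); lia.
Qed.

Lemma small_dot_in_box M k z c B : pos_vec M z -> 0 < c ->
  (forall n, (n <= M)%nat -> c <= z n) -> (forall n, (M < n)%nat -> k n = 0%nat) ->
  dot M k z < INR B * c -> In k (boxl (fun _ => 0%nat) (fun _ => B) (S M)).
Proof.
  intros Pz Hc Hcz Hk Hlt. apply boxl_in; [| intros i Hi; apply Hk; lia].
  intros i Hi. split; [lia |].
  destruct (Nat.le_gt_cases (k i) B) as [Hle | Hgt]; [exact Hle | exfalso].
  assert (HB : INR B <= INR (k i)) by (apply le_INR; lia).
  pose proof (dot_ge_term M k z i Pz ltac:(lia)). pose proof (Hcz i ltac:(lia)).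
  pose proof (pos_INR B).
  assert (INR B * c <= INR (k i) * z i) by (apply Rmult_le_compat; lra). lra.
Qed.

Lemma Ltau_inL M t k : In k (Ltau M t) -> inL M t k.
Proof.
  unfold Ltau. intros H. apply filter_In in H. destruct H as [Hb Hk].
  unfold inLb in Hk. apply andb_prop in Hk. destruct Hk as [Hk Hle].
  apply andb_prop in Hk. destruct Hk as [H0 Hch].
  split; [split; [| split] |].
  - apply Nat.eqb_eq; auto.
  - intros n Hn Hp. rewrite forallb_forall in Hch. specialize (Hch n ltac:(apply in_seq; lia)).
    apply Nat.ltb_lt in Hp. rewrite Hp in Hch. simpl in Hch. apply Nat.ltb_lt; auto.
  - intros n Hn. apply (boxl_zero _ _ _ _ Hb). lia.
  - destruct (Rle_dec (dot M k t) (one_dot M t)); auto. discriminate.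
Qed.

Lemma inL_Ltau M t k : pos_vec M t -> inL M t k -> In k (Ltau M t).
Proof.
  intros Ht [[H0 [Hch Hz]] Hle]. unfold Ltau. apply filter_In. split.
  - apply boxl_in; [| intros i Hi; apply Hz; lia].
    intros i Hi. split; [lia |]. unfold kbound.
    pose proof (dot_ge_term M k t i Ht ltac:(lia)). pose proof (Ht i ltac:(lia)).
    assert (Hq : INR (k i) <= one_dot M t / t i).
    { apply (Rmult_le_reg_r (t i)); auto. unfold Rdiv. rewrite Rmult_assoc, Rinv_l; lra. }
    destruct (archimed (one_dot M t / t i)) as [A _].
    rewrite INR_IZR_INZ in Hq.
    assert (Hlt : IZR (Z.of_nat (k i)) < IZR (up (one_dot M t / t i))) by lra.
    apply lt_IZR in Hlt. lia.
  - unfold inLb. rewrite H0. simpl.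
    assert (forallb (fun n => implb (0 <? k n)%nat (0 <? k (n - 1))%nat) (seq 1 M) = true) as ->.
    { apply forallb_forall. intros n Hn. apply in_seq in Hn.
      destruct (Nat.ltb_spec 0 (k n)); simpl; auto. apply Nat.ltb_lt. apply Hch; auto; lia. }
    simpl. destruct (Rle_dec (dot M k t) (one_dot M t)); auto.
Qed.

Definition flt (s : R) (l : list R) : list R :=
  filter (fun s' => if Rlt_dec s' s then true else false) l.

Lemma flt_mono s s' l : s <= s' -> (length (flt s l) <= length (flt s' l))%nat.
Proof.
  intros H. induction l as [|a l IH]; simpl; auto.
  destruct (Rlt_dec a s); destruct (Rlt_dec a s'); simpl; try lia. lra.
Qed.

Lemma flt_strict s s' l : In s l -> s < s' -> (length (flt s l) < length (flt s' l))%nat.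
Proof.
  intros Hin H. induction l as [|a l IH]; simpl; [destruct Hin |].
  destruct Hin as [-> | Hin].
  - destruct (Rlt_dec s s); [lra |]. destruct (Rlt_dec s s'); [| lra]. simpl.
    pose proof (flt_mono s s' l ltac:(lra)). lia.
  - specialize (IH Hin).
    destruct (Rlt_dec a s); destruct (Rlt_dec a s'); simpl; try lia. lra.
Qed.

Definition rank {A} (f : A -> R) (l : list A) (c : R) : nat :=
  length (flt c (nodup Req_dec_T (map f l))).

Lemma filter_length_perm {A} (p : A -> bool) l l' :
  Permutation l l' -> length (filter p l) = length (filter p l').
Proof.
  induction 1; simpl; auto.
  - destruct (p x); simpl; auto.
  - destruct (p x); destruct (p y); simpl; auto.
  - congruence.
Qed.

Lemma rank_same_members {A} (f : A -> R) l l' c :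
  (forall a, In a l <-> In a l') -> rank f l c = rank f l' c.
Proof.
  intros Hl. unfold rank, flt. apply filter_length_perm.
  apply NoDup_Permutation; try apply NoDup_nodup.
  intros s. rewrite !nodup_In, !in_map_iff.
  split; intros [a [Ea Ha]]; exists a; split; auto; apply Hl; auto.
Qed.

Lemma rank_same_pattern {A} (f g : A -> R) (l : list A) (cf cg : R) :
  (forall a, In a l -> (f a < cf <-> g a < cg)) ->
  (forall a b, In a l -> In b l -> (f a = f b <-> g a = g b)) ->
  rank f l cf = rank g l cg.
Proof.
  unfold rank. induction l as [|a l IH]; intros H1 H2; simpl; auto.
  assert (IH' := IH ltac:(intros; apply H1; right; auto) ltac:(intros; apply H2; right; auto)).
  assert (Hiff : In (f a) (map f l) <-> In (g a) (map g l)).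
  { split; intros Hi; apply in_map_iff in Hi; destruct Hi as [b [Eb Hb]];
      apply in_map_iff; exists b; split; auto;
      apply (H2 b a); [right | left | | right | left |]; auto. }
  destruct (in_dec Req_dec_T (f a) (map f l)); destruct (in_dec Req_dec_T (g a) (map g l));
    try tauto.
  unfold flt in *. simpl. assert (Hl := H1 a ltac:(left; auto)).
  destruct (Rlt_dec (f a) cf); destruct (Rlt_dec (g a) cg); simpl; try tauto; lia.
Qed.

Lemma Psi_dot M t x k k' : dot M k t = dot M k' t -> Psi M t x k = Psi M t x k'.
Proof. intros E. unfold Psi. rewrite E. auto. Qed.

Lemma Psi_in M t x k : In (dot M k t) (Ssupp M t x) ->
  Psi M t x k = S (length (flt (dot M k t) (Ssupp M t x))).
Proof.
  intros H. unfold Psi. destruct (in_dec Req_dec_T (dot M k t) (Ssupp M t x)); [auto | tauto].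
Qed.

Lemma Psi_nz M t x k : Psi M t x k <> 0%nat -> In (dot M k t) (Ssupp M t x).
Proof. unfold Psi. destruct (in_dec Req_dec_T (dot M k t) (Ssupp M t x)); auto. tauto. Qed.

Lemma Psi_lt_iff M t x k k' : Psi M t x k <> 0%nat -> Psi M t x k' <> 0%nat ->
  (dot M k t < dot M k' t <-> (Psi M t x k < Psi M t x k')%nat).
Proof.
  intros H1 H2. apply Psi_nz in H1. apply Psi_nz in H2.
  rewrite (Psi_in _ _ _ _ H1), (Psi_in _ _ _ _ H2). split.
  - intros H. pose proof (flt_strict _ _ _ H1 H). lia.
  - intros H. destruct (Rtotal_order (dot M k t) (dot M k' t)) as [Hlt | [E | Hgt]]; auto.
    + rewrite E in H. lia.
    + pose proof (flt_strict _ _ _ H2 Hgt). lia.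
Qed.

Definition Dist (M : nat) (t : nat -> R) : Prop :=
  forall k k', inL M t k -> inL M t k' -> dot M k t = dot M k' t -> k = k'.

Lemma coef_at_delay M t x' a : Dist M t -> inL M t a ->
  exists n, coef M t x' (dot M a t) = INR n * amp M x' a /\ (In a (Ltau M t) -> (1 <= n)%nat).
Proof.
  intros HD Ha. unfold coef. generalize (fun b (Hb : In b (Ltau M t)) => Ltau_inL M t b Hb).
  generalize (Ltau M t). induction l as [|b l IH]; intros Hl; simpl.
  - exists 0%nat. split; [simpl; ring | tauto].
  - destruct IH as [n [E Hn]]; [intros; apply Hl; right; auto |].
    destruct (Req_dec_T (dot M b t) (dot M a t)) as [Eb | Eb].
    + assert (b = a) by (apply HD; auto; apply Hl; left; auto).
      subst b. exists (S n). split; [rewrite E, S_INR; ring | intros; lia].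
    + exists n. split; [rewrite E; ring |]. intros [<- | Hi]; [tauto | auto].
Qed.

Lemma Ssupp_full M t x' : Dist M t -> (forall k, inL M t k -> amp M x' k <> 0) ->
  Ssupp M t x' = nodup Req_dec_T (map (fun k => dot M k t) (Ltau M t)).
Proof.
  intros HD HA. unfold Ssupp. f_equal. apply forallb_filter_id, forallb_forall.
  intros s Hs. apply in_map_iff in Hs. destruct Hs as [a [<- Ha]].
  destruct (coef_at_delay M t x' a HD (Ltau_inL _ _ _ Ha)) as [n [E Hn]]. specialize (Hn Ha).
  destruct (Req_dec_T (coef M t x' (dot M a t)) 0) as [Z |]; auto.
  rewrite E in Z. apply Rmult_integral in Z. destruct Z as [Z | Z].
  - apply (lt_INR 0 n) in Hn. simpl in Hn. lra.
  - exfalso; apply (HA a); auto. apply Ltau_inL; auto.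
Qed.

Lemma Psi_rank M t x' k : pos_vec M t -> Dist M t ->
  (forall k, inL M t k -> amp M x' k <> 0) -> inL M t k ->
  Psi M t x' k = S (rank (fun k => dot M k t) (Ltau M t) (dot M k t)).
Proof.
  intros Hp HD HA Hk. unfold rank. rewrite <- (Ssupp_full M t x' HD HA). apply Psi_in.
  rewrite (Ssupp_full M t x' HD HA). apply nodup_In, in_map_iff.
  exists k. split; auto. apply inL_Ltau; auto.
Qed.

Lemma generic_Dist M tau x : generic M tau x -> Dist M tau.
Proof.
  intros [_ G2] k k' Hk Hk' E. apply functional_extensionality.
  apply (G2 k k' Hk Hk'). apply Psi_dot; auto.
Qed.

Lemma generic_amp M tau x k : generic M tau x -> inL M tau k -> amp M x k <> 0.
Proof.
  intros G Hk Z. assert (HD := generic_Dist _ _ _ G).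
  destruct G as [G1 _]. apply G1 in Hk as Hp. apply Psi_nz in Hp.
  unfold Ssupp in Hp. apply nodup_In, filter_In in Hp. destruct Hp as [_ Hc].
  destruct (coef_at_delay M tau x k HD Hk) as [n [E _]]. rewrite E, Z, Rmult_0_r in Hc.
  destruct (Req_dec_T 0 0); [discriminate | tauto].
Qed.

Lemma generic_Rpsi M tau x : cube_vec M x -> generic M tau x -> Rpsi M tau x.
Proof. intros Hc G. split; auto. intros k Hk. apply (generic_amp M tau x); auto. Qed.

(** ** Characterisation of U_psi by the order pattern of the delays *)

Lemma strict_mono_injective {A} (P : A -> Prop) (f g : A -> R) :
  (forall a b, P a -> P b -> f a = f b -> a = b) ->
  (forall a b, P a -> P b -> f a < f b -> g a < g b) ->
  forall a b, P a -> P b -> g a = g b -> a = b.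
Proof.
  intros Hinj Hmono a b Ha Hb E.
  destruct (Rtotal_order (f a) (f b)) as [Hlt | [Hfe | Hgt]].
  - apply (Hmono a b Ha Hb) in Hlt. lra.
  - apply Hinj; auto.
  - apply (Hmono b a Hb Ha) in Hgt. lra.
Qed.

Lemma strict_mono_reflects {A} (P : A -> Prop) (f g : A -> R) :
  (forall a b, P a -> P b -> f a = f b -> a = b) ->
  (forall a b, P a -> P b -> f a < f b -> g a < g b) ->
  forall a b, P a -> P b -> g a < g b -> f a < f b.
Proof.
  intros Hinj Hmono a b Ha Hb Hg.
  destruct (Rtotal_order (f a) (f b)) as [Hlt | [Hfe | Hgt]]; auto.
  - rewrite (Hinj a b Ha Hb Hfe) in Hg. lra.
  - apply (Hmono b a Hb Ha) in Hgt. lra.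
Qed.

Definition same_pattern (M : nat) (tau t : nat -> R) : Prop :=
  pos_vec M t /\ (forall k, inL M t k <-> inL M tau k) /\
  (forall k k', inL M tau k -> inL M tau k' ->
     (dot M k tau < dot M k' tau <-> dot M k t < dot M k' t)).

Lemma same_pattern_intro M tau t : Dist M tau -> pos_vec M t ->
  (forall k, inL M t k <-> inL M tau k) ->
  (forall k k', inL M tau k -> inL M tau k' ->
     dot M k tau < dot M k' tau -> dot M k t < dot M k' t) ->
  same_pattern M tau t.
Proof.
  intros HD Hp HL Hmono. split; [auto | split; [auto |]].
  intros k k' Hk Hk'. split; [apply Hmono; auto |].
  apply (strict_mono_reflects (inL M tau) (fun k => dot M k tau) (fun k => dot M k t)); auto.
Qed.

Lemma same_pattern_refl M tau : pos_vec M tau -> same_pattern M tau tau.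
Proof. intros Hp. split; auto. split; intros; tauto. Qed.

Lemma same_pattern_Dist M tau t : Dist M tau -> same_pattern M tau t -> Dist M t.
Proof.
  intros HD [_ [HL HO]] a b Ha Hb E. apply HL in Ha. apply HL in Hb.
  apply (strict_mono_injective (inL M tau) (fun k => dot M k tau) (fun k => dot M k t)); auto.
  intros; apply HO; auto.
Qed.

Lemma same_pattern_Upsi M tau x t : pos_vec M tau -> generic M tau x ->
  same_pattern M tau t -> Upsi M tau x t.
Proof.
  intros Hpt G Ht. assert (HDtau := generic_Dist _ _ _ G).
  assert (HDt := same_pattern_Dist M tau t HDtau Ht).
  destruct Ht as [Hp [HL HO]]. split; auto. intros x' [_ HA]. split; auto. intros k Hk.
  rewrite (Psi_rank M t x' k Hp HDt ltac:(intros; apply HA, HL; auto) ltac:(apply HL; auto)).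
  rewrite (Psi_rank M tau x k Hpt HDtau ltac:(intros; apply (generic_amp M tau x); auto) Hk).
  f_equal. rewrite (rank_same_members _ (Ltau M t) (Ltau M tau)).
  - symmetry. apply rank_same_pattern.
    + intros a Ha. apply Ltau_inL in Ha. apply HO; auto.
    + intros a b Ha Hb. apply Ltau_inL in Ha. apply Ltau_inL in Hb.
      split; intros E; [rewrite (HDtau a b Ha Hb E) | rewrite (HDt a b ltac:(apply HL; auto)
        ltac:(apply HL; auto) E)]; auto.
  - intros a. split; intros Ha; apply Ltau_inL in Ha; apply inL_Ltau; auto; apply HL; auto.
Qed.

(** Conversely, testing U_psi against R' = R itself already forces the same pattern. *)
Lemma Upsi_same_pattern M tau x t : cube_vec M x -> generic M tau x ->
  Upsi M tau x t -> same_pattern M tau t.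
Proof.
  intros Hc G [Hp HU]. destruct (HU x (generic_Rpsi M tau x Hc G)) as [HL HP].
  split; [auto | split; [auto |]].
  intros k k' Hk Hk'. destruct G as [G1 _].
  rewrite (Psi_lt_iff M tau x k k' (G1 k Hk) (G1 k' Hk')).
  rewrite (Psi_lt_iff M t x k k'); rewrite ?HP, ?(HP k'); auto; tauto.
Qed.

Lemma Upsi_iff_same_pattern M tau x t : pos_vec M tau -> cube_vec M x -> generic M tau x ->
  (Upsi M tau x t <-> same_pattern M tau t).
Proof.
  intros Hp Hc G. split; [apply Upsi_same_pattern | apply same_pattern_Upsi]; auto.
Qed.

(** ** Convexity and openness *)

(** The same-pattern conditions are linear inequalities, hence preserved by convex combinations. *)
Lemma same_pattern_comb M tau y z l : Dist M tau ->
  same_pattern M tau y -> same_pattern M tau z -> 0 <= l <= 1 ->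
  same_pattern M tau (comb l y z).
Proof.
  intros HD [Py [Ly Oy]] [Pz [Lz Oz]] Hl. apply same_pattern_intro; auto.
  - intros n Hn. pose proof (comb_lt l 0 0 (y n) (z n) Hl (Py n Hn) (Pz n Hn)).
    unfold comb. lra.
  - intros k. split.
    + intros [Hk Hd]. rewrite dot_comb, one_dot_comb in Hd.
      destruct (Rle_dec (dot M k y) (one_dot M y)); [apply Ly; split; auto |].
      destruct (Rle_dec (dot M k z) (one_dot M z)); [apply Lz; split; auto |].
      pose proof (comb_lt l (one_dot M y) (one_dot M z) (dot M k y) (dot M k z) Hl
        ltac:(lra) ltac:(lra)). lra.
    + intros Hk. destruct (proj2 (Ly k) Hk) as [Hk1 Hky]. destruct (proj2 (Lz k) Hk) as [_ Hkz].
      split; auto. rewrite dot_comb, one_dot_comb. apply comb_le; auto.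
  - intros k k' Hk Hk' Hlt. rewrite !dot_comb.
    apply comb_lt; auto; [apply Oy | apply Oz]; auto.
Qed.

(** Near a positive vector y with distinct delays, L^z = L^y: the finitely many
    multi-indices of a bounded box cannot cross the hyperplane <k,z> = <1,z>, except
    the index 1, which lies on it for every z. *)
Lemma inL_locally_constant M y : pos_vec M y -> Dist M y ->
  nb M y (fun z => pos_vec M z /\ forall k, inL M z k <-> inL M y k).
Proof.
  intros Py Dy. destruct (min_pos M y Py) as [m [Hm Hmy]].
  destruct (INR_archimed (m / 2) (one_dot M y + 1) ltac:(lra)) as [B HB].
  set (BX := boxl (fun _ => 0%nat) (fun _ => B) (S M)).
  assert (E1 : nb M y (fun z => forall n, (n <= M)%nat -> m / 2 < z n)).
  { apply nb_upto. intros n Hn.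
    apply (nb_lt M (fun _ => m / 2)); [apply cont_const | apply cont_coord; auto |].
    pose proof (Hmy n Hn). lra. }
  assert (E2 : nb M y (fun z => one_dot M z < one_dot M y + 1)).
  { apply (nb_lt M _ (fun _ => one_dot M y + 1)); [apply cont_one_dot | apply cont_const | lra]. }
  assert (E3 : nb M y (fun z => forall a, In a BX ->
                 one_dot M y < dot M a y -> one_dot M z < dot M a z)).
  { apply nb_list. intros a _. apply nb_lt_persist; [apply cont_one_dot | apply cont_dot]. }
  assert (E4 : nb M y (fun z => forall a, In a (Ltau M y) ->
                 dot M a y < one_dot M y -> dot M a z < one_dot M z)).
  { apply nb_list. intros a _. apply nb_lt_persist; [apply cont_dot | apply cont_one_dot]. }
  eapply nb_mono;
    [| apply nb_and; [apply E1 | apply nb_and; [apply E2 | apply nb_and; [apply E3 | apply E4]]]].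
  intros z [H1 [H2 [H3 H4]]].
  assert (Pz : pos_vec M z) by (intros n Hn; specialize (H1 n Hn); lra).
  split; [exact Pz |]. intros k. split.
  - intros [Hk Hd]. split; [exact Hk |].
    destruct (Rle_dec (dot M k y) (one_dot M y)) as [Hle | Hgt]; [exact Hle | exfalso].
    assert (Hbox : In k BX).
    { apply (small_dot_in_box M k z (m / 2) B Pz ltac:(lra));
        [intros n Hn; left; auto | apply (proj2 (proj2 Hk)) | lra]. }
    specialize (H3 k Hbox ltac:(lra)). lra.
  - intros Hk. destruct Hk as [Hk [Hlt | Heq]]; split; auto.
    + left. apply H4; auto. apply inL_Ltau; auto. split; [auto | left; auto].
    + assert (k = onesv M) as ->.
      { apply Dy; [split; [auto | right; auto] | apply onesv_inL | rewrite dot_onesv; auto]. }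
      rewrite dot_onesv. lra.
Qed.

(** The same-pattern set is open: L^z is locally constant, and the finitely many strict
    inequalities between delays of L^tau persist. *)
Lemma same_pattern_open M tau y : pos_vec M tau -> Dist M tau ->
  same_pattern M tau y -> nb M y (same_pattern M tau).
Proof.
  intros Ptau HD Hy. assert (Dy := same_pattern_Dist M tau y HD Hy).
  destruct Hy as [Py [Ly Oy]].
  assert (Hord : nb M y (fun z => forall a, In a (Ltau M tau) -> forall b, In b (Ltau M tau) ->
                   dot M a y < dot M b y -> dot M a z < dot M b z)).
  { apply nb_list. intros a _. apply nb_list. intros b _. apply nb_lt_persist; apply cont_dot. }
  eapply nb_mono; [| apply (nb_and _ _ _ _ (inL_locally_constant M y Py Dy) Hord)].
  intros z [[Pz Lz] Oz]. apply same_pattern_intro; auto.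
  - intros k. rewrite Lz. apply Ly.
  - intros k k' Hk Hk' Hlt. apply Oz; [apply inL_Ltau; auto .. | apply Oy; auto].
Qed.

(** R_psi is open: the cube is open and the finitely many amplitudes a(., k),
    k in L^tau, are continuous, so their non-vanishing persists. *)
Lemma Rpsi_open M tau y : pos_vec M tau -> Rpsi M tau y -> nb M y (Rpsi M tau).
Proof.
  intros Hpt [Hc HA].
  assert (E1 : nb M y (fun z => forall n, (n <= M)%nat -> -1 < z n /\ z n < 1)).
  { apply nb_upto. intros n Hn. specialize (Hc n Hn).
    assert (Hx : cont M (fun z => z n)) by (apply cont_coord; auto).
    apply nb_and; [apply (nb_lt M (fun _ => -1)) | apply (nb_lt M _ (fun _ => 1))];
      auto; try apply cont_const; lra. }
  assert (E2 : nb M y (fun z => forall a, In a (Ltau M tau) -> amp M z a <> 0)).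
  { apply nb_list. intros a Ha. apply nb_neq; [apply cont_amp | apply HA, Ltau_inL; auto]. }
  eapply nb_mono; [| apply (nb_and _ _ _ _ E1 E2)]. intros z [H1 H2]. split.
  - intros n Hn. apply H1; auto.
  - intros k Hk. apply H2, inL_Ltau; auto.
Qed.

Theorem proposition4p2 (M : nat) (tau x : nat -> R) :
  (1 <= M)%nat ->
  pos_vec M tau -> cube_vec M x ->
  generic M tau x ->
  (convex_vec (Upsi M tau x) /\ open_vec M (Upsi M tau x) /\ Upsi M tau x tau) /\
  (open_vec M (Rpsi M tau) /\ Rpsi M tau x).
Proof.
  intros _ Hp Hc G.
  assert (HD := generic_Dist M tau x G).
  assert (HU := fun t => Upsi_iff_same_pattern M tau x t Hp Hc G).
  split; [split; [| split] | split].
  - intros y z l Hy Hz Hl. apply HU, (same_pattern_comb M tau y z l HD); auto; apply HU; auto.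
  - intros y Hy. apply (nb_mono M y (same_pattern M tau)); [intros z; apply HU |].
    apply same_pattern_open; auto. apply HU; auto.
  - apply HU, same_pattern_refl; auto.
  - intros y Hy. apply Rpsi_open; auto.
  - apply generic_Rpsi; auto.
Qed.
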